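(* Let $\alpha\in(0,1)\cup(1,\infty)$, let $\sigma_{A_1B_1}$ and $\tau_{A_2B_2}$ be states on finite-dimensional Hilbert spaces, and let $\rho_{A_1A_2B_1B_2}=\sigma_{A_1B_1}\otimes\tau_{A_2B_2}$. Then $$E^{\mathrm{sq}}_\alpha(A_1A_2;B_1B_2)_\rho\leq E^{\mathrm{sq}}_\alpha(A_1;B_1)_\sigma+E^{\mathrm{sq}}_\alpha(A_2;B_2)_\tau.$$
   Context: All Hilbert spaces are finite-dimensional and $\log$ is the natural logarithm. For a positive semi-definite operator $M$ and a function $f$, $f(M)$ is defined by applying $f$ only to the nonzero eigenvalues (negative powers are generalized inverses on the support). For a state $\rho_{ABE}$ and $\alpha\in(0,1)\cup(1,\infty)$, $$I_\alpha(A;B|E)_\rho=\frac{\alpha}{\alpha-1}\log\mathrm{Tr}\Big\{\Big(\rho_E^{(\alpha-1)/2}\,\mathrm{Tr}_A\big\{\rho_{AE}^{(1-\alpha)/2}\rho_{ABE}^{\alpha}\rho_{AE}^{(1-\alpha)/2}\big\}\,\rho_E^{(\alpha-1)/2}\Big)^{1/\alpha}\Big\}.$$ The Rényi squashed entanglement of a bipartite state $\rho_{AB}$ is $E^{\mathrm{sq}}_\alpha(A;B)_\rho=\frac12\inf\{I_\alpha(A;B|E)_\omega:\ \mathrm{Tr}_E\omega_{ABE}=\rho_{AB}\}$, the infimum over all extensions $\omega_{ABE}$ on any finite-dimensional $\mathcal{H}_E$. In $E^{\mathrm{sq}}_\alpha(A_1A_2;B_1B_2)$ the first party holds $A_1A_2$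 and the second $B_1B_2$. *)

From HB Require Import structures.
From mathcomp Require Import all_boot all_order all_algebra.
From mathcomp Require Import sesquilinear spectral.
From mathcomp Require Import all_classical all_reals all_analysis.
From mathcomp Require Import complex mxtens.

Set Implicit Arguments.
Unset Strict Implicit.
Unset Printing Implicit Defensive.

Import Order.TTheory GRing.Theory Num.Theory.
Local Open Scope ring_scope.
Local Open Scope sesquilinear_scope.

Section QuantumDefs.
Variable R : realType.
Local Notation C := R[i].

(* Composite systems use the Kronecker index convention of [mxtens]:
   the index of 'I_(m * n) corresponding to (i, j) is mxtens_index (i, j). *)

Definition hermmx n (M : 'M[C]_n) : Prop := M ^t* = M.

Definition psdmx n (M : 'M[C]_n) : Prop :=
  hermmx M /\ forall v : 'rV[C]_n, 0 <= (v *m M *m v ^t*) 0 0.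

Definition density n (M : 'M[C]_n) : Prop := psdmx M /\ \tr M = 1.

Definition spec_dec n (M : 'M[C]_n) (p : 'M[C]_n * 'rV[R]_n) : Prop :=
  p.1 \is unitarymx /\
  M = p.1 ^t* *m diag_mx (map_mx (fun x => (x%:C)%C) p.2) *m p.1.

(* f(M): apply f to the nonzero eigenvalues only (zero eigenvalues stay 0);
   defined through a chosen spectral decomposition (0 if M has none,
   which never happens for the Hermitian matrices it is applied to). *)
Definition mxfun (f : R -> R) n (M : 'M[C]_n) : 'M[C]_n :=
  match pselect (exists p, spec_dec M p) with
  | left H => let p := projT1 (cid H) in
      p.1 ^t* *m diag_mx (map_mx (fun x => ((if x == 0 then 0 else f x)%:C)%C) p.2)
          *m p.1
  | right _ => 0
  end.

(* real power M^s (generalized inverse on the support for s < 0) *)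
Definition mxpow (s : R) n (M : 'M[C]_n) : 'M[C]_n := mxfun (fun x => powR x s) M.

Definition trR m n (M : 'M[C]_(m * n)) : 'M[C]_m :=
  \matrix_(i, j) \sum_(k < n) M (mxtens_index (i, k)) (mxtens_index (j, k)).
Definition trL m n (M : 'M[C]_(m * n)) : 'M[C]_n :=
  \matrix_(i, j) \sum_(k < m) M (mxtens_index (k, i)) (mxtens_index (k, j)).

(* tripartite system A B E with index space 'I_(a * b * e) = 'I_((a * b) * e) *)
Definition idx3 a b e (i : 'I_a) (j : 'I_b) (k : 'I_e) : 'I_(a * b * e) :=
  mxtens_index (mxtens_index (i, j), k).
Definition fst3 a b e (x : 'I_(a * b * e)) : 'I_a :=
  (mxtens_unindex (mxtens_unindex x).1).1.
Definition snd3 a b e (x : 'I_(a * b * e)) : 'I_b :=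
  (mxtens_unindex (mxtens_unindex x).1).2.
Definition thd3 a b e (x : 'I_(a * b * e)) : 'I_e := (mxtens_unindex x).2.

Definition trB3 a b e (M : 'M[C]_(a * b * e)) : 'M[C]_(a * e) :=
  \matrix_(i, j) \sum_(k < b)
     M (idx3 (mxtens_unindex i).1 k (mxtens_unindex i).2)
       (idx3 (mxtens_unindex j).1 k (mxtens_unindex j).2).
Definition trA3 a b e (M : 'M[C]_(a * b * e)) : 'M[C]_(b * e) :=
  \matrix_(i, j) \sum_(k < a)
     M (idx3 k (mxtens_unindex i).1 (mxtens_unindex i).2)
       (idx3 k (mxtens_unindex j).1 (mxtens_unindex j).2).
(* X_AE (x) 1_B as an operator on ABE *)
Definition embB a b e (X : 'M[C]_(a * e)) : 'M[C]_(a * b * e) :=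
  \matrix_(i, j) (X (mxtens_index (fst3 i, thd3 i)) (mxtens_index (fst3 j, thd3 j))
                  * (snd3 i == snd3 j)%:R).

Definition renyiCMI (alpha : R) a b e (rho : 'M[C]_(a * b * e)) : R :=
  let rhoE := trL rho in
  let rhoAE := trB3 rho in
  let S := embB b (mxpow ((1 - alpha) / 2) rhoAE) in
  let Y := trA3 (S *m mxpow alpha rho *m S) in
  let T := (1%:M : 'M[C]_b) *t mxpow ((alpha - 1) / 2) rhoE in
  alpha / (alpha - 1) * ln (complex.Re (\tr (mxpow (alpha^-1) (T *m Y *m T)))).

Definition sqEnt (alpha : R) a b (rho : 'M[C]_(a * b)) : \bar R :=
  ((2^-1)%:E * ereal_inf [set x : \bar R | exists (e : nat) (w : 'M[C]_(a * b * e)),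
      density w /\ trR w = rho /\ x = (renyiCMI alpha w)%:E])%E.

(* sigma_{A1B1} (x) tau_{A2B2} regarded as a state of (A1A2)(B1B2) *)
Definition prod_state a1 b1 a2 b2 (sigma : 'M[C]_(a1 * b1)) (tau : 'M[C]_(a2 * b2))
  : 'M[C]_((a1 * a2) * (b1 * b2)) :=
  \matrix_(i, j)
    let iA := mxtens_unindex (mxtens_unindex i).1 in
    let iB := mxtens_unindex (mxtens_unindex i).2 in
    let jA := mxtens_unindex (mxtens_unindex j).1 in
    let jB := mxtens_unindex (mxtens_unindex j).2 in
    sigma (mxtens_index (iA.1, iB.1)) (mxtens_index (jA.1, jB.1))
    * tau (mxtens_index (iA.2, iB.2)) (mxtens_index (jA.2, jB.2)).

End QuantumDefs.

From HB Require Import structures.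
From mathcomp Require Import all_boot all_order all_algebra.
From mathcomp Require Import sesquilinear spectral.
From mathcomp Require Import all_classical all_reals all_analysis.
From mathcomp Require Import complex mxtens.
Import Order.TTheory GRing.Theory Num.Theory.
Local Open Scope ring_scope.

(* Given extensions [w1] of [sigma] and [w2] of [tau], their tensor product is
   an extension of [sigma (x) tau] with E = E1 E2.  Every ingredient of
   I_alpha (marginals, matrix powers, products, partial traces) commutes with
   tensor products, so the operator whose 1/alpha power is traced in
   I_alpha(w1 (x) w2) is the tensor product of those of [w1] and [w2].  Its
   trace factorises into two positive numbers: positivity holds because the
   support of rho_ABE lies in that of rho_AE (x) 1_B, and that of rho_AE in
   that of 1_A (x) rho_E, so the conjugations in I_alpha cannot annihilate
   rho^alpha.  Hence I_alpha is additive on tensor products, and taking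
   infima over extensions gives the inequality. *)

Set Implicit Arguments.
Unset Strict Implicit.
Unset Printing Implicit Defensive.
Local Open Scope sesquilinear_scope.

(** * Spectral calculus *)

Section SpectralCalculus.
Variable R : realType.
Local Notation C := R[i].
Local Notation cplx := (fun x : R => x%:C%C).

Lemma trmxC_mul m n p (A : 'M[C]_(m, n)) (B : 'M[C]_(n, p)) :
  (A *m B)^t* = B^t* *m A^t*.
Proof. by rewrite trmx_mul map_mxM. Qed.

Lemma trmxC1 n : (1%:M : 'M[C]_n)^t* = 1%:M.
Proof. by rewrite trmx1 map_mx1. Qed.

Lemma unitarymx_trC_mul n (U : 'M[C]_n) : U \is unitarymx -> U^t* *m U = 1%:M.
Proof. by move=> uU; rewrite -[U^t*]mul1mx mulmxKtV. Qed.

Definition specmx n (U : 'M[C]_n) (d : 'rV[R]_n) : 'M[C]_n :=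
  U^t* *m diag_mx (map_mx cplx d) *m U.

Lemma spec_decE n (M : 'M[C]_n) U d :
  spec_dec M (U, d) <-> U \is unitarymx /\ M = specmx U d.
Proof. by []. Qed.

Lemma specmx0 n (U : 'M[C]_n) : specmx U 0 = 0.
Proof. by rewrite /specmx map_mx0 raddf0 mulmx0 mul0mx. Qed.

Lemma specmx_trC n (U : 'M[C]_n) d : (specmx U d)^t* = specmx U d.
Proof.
have diagC : (diag_mx (map_mx cplx d))^t* = diag_mx (map_mx cplx d).
  apply/matrixP => i j; rewrite !mxE [j == i]eq_sym.
  case: eqVneq => [->|_]; last by rewrite mulr0n conjC0.
  by rewrite mulr1n; exact: conjc_real.
by rewrite /specmx !trmxC_mul trmxCK diagC mulmxA.
Qed.

Lemma specmx_mul n (U : 'M[C]_n) d1 d2 : U \is unitarymx ->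
  specmx U d1 *m specmx U d2 = specmx U (\row_j (d1 0 j * d2 0 j)).
Proof.
move=> uU; rewrite /specmx.
have -> : map_mx cplx (\row_j (d1 0 j * d2 0 j)) =
          \row_j ((map_mx cplx d1) 0 j * (map_mx cplx d2) 0 j).
  by apply/matrixP => i j; rewrite !mxE rmorphM.
by rewrite -mulmx_diag !mulmxA mulmxtVK.
Qed.

Lemma mxtrace_specmx n (U : 'M[C]_n) d : U \is unitarymx ->
  \tr (specmx U d) = (\sum_k d 0 k)%:C%C.
Proof.
move=> uU; rewrite /specmx mxtrace_mulC mulmxA (unitarymxP uU) mul1mx rmorph_sum.
by apply: eq_bigr => k _; rewrite !mxE eqxx.
Qed.

(* [W := V U^*] intertwines the two eigenvalue matrices, hence also any
   function of them. *)
Lemma specmx_map_uniq n (U V : 'M[C]_n) d e (g : R -> R) :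
  U \is unitarymx -> V \is unitarymx -> specmx U d = specmx V e ->
  specmx U (map_mx g d) = specmx V (map_mx g e).
Proof.
move=> uU uV eUV; set W := V *m U^t*.
have WU : W *m U = V by rewrite /W -mulmxA unitarymx_trC_mul // mulmx1.
have VW : V^t* *m W = U^t* by rewrite /W mulmxA unitarymx_trC_mul // mul1mx.
have WD : W *m diag_mx (map_mx cplx d) = diag_mx (map_mx cplx e) *m W.
  have := congr1 (fun X => V *m X *m U^t*) eUV.
  rewrite /specmx /= !mulmxA -(mulmxA _ U) (unitarymxP uU) mulmx1.
  by rewrite (unitarymxP uV) mul1mx -mulmxA.
clearbody W.
have WDg : W *m diag_mx (map_mx cplx (map_mx g d)) =
           diag_mx (map_mx cplx (map_mx g e)) *m W.
  apply/matrixP => i j; move/matrixP: WD => /(_ i j).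
  rewrite !mul_mx_diag !mul_diag_mx !mxE.
  have [->|Wn0] := eqVneq (W i j) 0; first by rewrite !mulr0 !mul0r.
  by rewrite mulrC => /(mulIf Wn0) /complexI ->; rewrite mulrC.
by rewrite /specmx -{2}WU !mulmxA -(mulmxA _ _ W) -WDg !mulmxA VW.
Qed.

Lemma mxfunE (f : R -> R) n (M : 'M[C]_n) U d : spec_dec M (U, d) ->
  mxfun f M = specmx U (map_mx (fun x => if x == 0 then 0 else f x) d).
Proof.
move=> [uU eM]; rewrite /mxfun; case: pselect => [H|[]]; last by exists (U, d).
case: (projT2 (cid H)) => uV eV.
have := specmx_map_uniq (fun x => if x == 0 then 0 else f x) uV uU (etrans (esym eV) eM).
by rewrite /specmx -!map_mx_comp; apply.
Qed.

Lemma hermmx_spec_dec n (M : 'M[C]_n) : hermmx M -> exists p, spec_dec M p.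
Proof.
move=> hM; have Hh : M \is hermsymmx by apply/is_hermitianmxP; rewrite expr0 scale1r hM.
have /orthomx_spectralP eM := hermitian_normalmx Hh.
exists (spectralmx M, map_mx (@complex.Re R) (spectral_diag M)); split => /=.
  exact: spectral_unitarymx.
rewrite -invmx_unitary ?spectral_unitarymx // -map_mx_comp.
suff -> : map_mx (cplx \o @complex.Re R) (spectral_diag M) = spectral_diag M by [].
apply/matrixP => i j; rewrite !mxE /= RRe_real //.
by move/mxOverP: (hermitian_spectral_diag_real Hh); apply.
Qed.

Lemma specmx_form n (U : 'M[C]_n) (d : 'rV[R]_n) (v : 'rV[C]_n) :
  (v *m specmx U d *m v^t*) 0 0 =
  \sum_k (d 0 k)%:C%C * ((v *m U^t*) 0 k * ((v *m U^t*) 0 k)^*).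
Proof.
have -> : v *m specmx U d *m v^t* =
          v *m U^t* *m diag_mx (map_mx cplx d) *m (v *m U^t*)^t*.
  by rewrite /specmx trmxC_mul trmxCK !mulmxA.
rewrite mul_mx_diag mxE; apply: eq_bigr => k _.
by rewrite !mxE mulrA [_ * (d 0 k)%:C%C]mulrC.
Qed.

Lemma psdmx_specmx n (U : 'M[C]_n) (d : 'rV[R]_n) :
  (forall k, 0 <= d 0 k) -> psdmx (specmx U d).
Proof.
move=> d0; split=> [|v]; first exact: specmx_trC.
rewrite specmx_form; apply: sumr_ge0 => k _.
by apply: mulr_ge0; [rewrite ler0c | exact: mulcJ_ge0].
Qed.

Lemma psdmx_spec_dec n (M : 'M[C]_n) : psdmx M ->
  exists U d, [/\ U \is unitarymx, M = specmx U d & forall k, 0 <= d 0 k].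
Proof.
move=> [hM qM]; have [[U d] [uU eM]] := hermmx_spec_dec hM.
exists U, d; split=> // k; have := qM (row k U).
rewrite eM specmx_form -row_mul (unitarymxP uU) (bigD1 k) //= big1 => [|j njk].
  by rewrite !mxE eqxx mulr1n conjC1 !mulr1 addr0 ler0c.
by rewrite !mxE eq_sym (negPf njk) mulr0n mul0r mulr0.
Qed.

Lemma psdmx_trace0 n (M : 'M[C]_n) : psdmx M -> \tr M = 0 -> M = 0.
Proof.
move=> /psdmx_spec_dec [U [d [uU -> d0]]]; rewrite mxtrace_specmx //.
move=> /complexI /eqP; rewrite psumr_eq0 // => /allP d_eq0.
suff -> : d = 0 by rewrite specmx0.
by apply/matrixP => i j; rewrite ord1 mxE; apply/eqP/d_eq0/mem_index_enum.
Qed.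

Lemma psdmx_congr m n (A : 'M[C]_(m, n)) (M : 'M[C]_n) :
  psdmx M -> psdmx (A *m M *m A^t*).
Proof.
move=> [hM qM]; split=> [|v]; first by rewrite /hermmx !trmxC_mul trmxCK hM mulmxA.
by have := qM (v *m A); rewrite !trmxC_mul !mulmxA.
Qed.

Lemma psdmx_congr_eq0 m n (A : 'M[C]_(m, n)) (M : 'M[C]_n) : psdmx M ->
  A *m M *m A^t* = 0 -> A *m M = 0.
Proof.
move=> /psdmx_spec_dec [U [d [uU -> d0]]]; rewrite /specmx.
have -> : A *m (U^t* *m diag_mx (map_mx cplx d) *m U) *m A^t* =
          A *m U^t* *m diag_mx (map_mx cplx d) *m (A *m U^t*)^t*.
  by rewrite trmxC_mul trmxCK !mulmxA.
rewrite !mulmxA; move: (A *m U^t*) => W WDW.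
suff -> : W *m diag_mx (map_mx cplx d) = 0 by rewrite mul0mx.
apply/matrixP => i k; rewrite mul_mx_diag !mxE.
move/matrixP: WDW => /(_ i i) /eqP; rewrite mul_mx_diag mxE.
under eq_bigr do rewrite !mxE mulrAC.
rewrite mxE psumr_eq0 => [|j _]; last by rewrite mulr_ge0 ?mulcJ_ge0 ?ler0c.
move/allP/(_ k (mem_index_enum k)); rewrite !mulf_eq0 conjC_eq0 orbb.
by case/orP=> /eqP->; rewrite ?mulr0 ?mul0r.
Qed.

Lemma psdmx0 n : psdmx (0 : 'M[C]_n).
Proof.
split=> [|v]; first by rewrite /hermmx trmx0 map_mx0.
by rewrite mulmx0 mul0mx mxE.
Qed.

Lemma psdmxD n (A B : 'M[C]_n) : psdmx A -> psdmx B -> psdmx (A + B).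
Proof.
move=> [hA qA] [hB qB]; split=> [|v]; last by rewrite mulmxDr mulmxDl mxE addr_ge0.
by rewrite /hermmx linearD /= map_mxD hA hB.
Qed.

Lemma psdmx_sum n (I : finType) (F : I -> 'M[C]_n) :
  (forall i, psdmx (F i)) -> psdmx (\sum_i F i).
Proof.
by move=> pF; apply: (big_ind (@psdmx R n)); [exact: psdmx0 | exact: psdmxD |].
Qed.

Lemma psdmx1 n : psdmx (1%:M : 'M[C]_n).
Proof.
split=> [|v]; first exact: trmxC1.
by rewrite mulmx1 mxE; apply: sumr_ge0 => k _; rewrite !mxE mulcJ_ge0.
Qed.

Lemma density_neq0 n (M : 'M[C]_n) : density M -> M != 0.
Proof.
by case=> _ trM; apply: contra_eq_neq trM => ->; rewrite mxtrace0 eq_sym oner_neq0.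
Qed.

(* [T'] inverts [T] on the range of the projector [Q], which contains that of [M]. *)
Lemma sandwich_neq0 n (Q M T T' : 'M[C]_n) : Q^t* = Q -> M^t* = M -> Q *m M = M ->
  T' *m T = Q -> T *m T' = Q -> M != 0 -> T *m M *m T != 0.
Proof.
move=> hQ hM QM T'T TT'; apply: contraNneq => TMT0; apply/eqP.
have MQ : M *m Q = M by rewrite -[LHS]trmxCK trmxC_mul hQ hM QM hM.
have : T' *m (T *m M *m T) *m T' = M by rewrite !mulmxA T'T -mulmxA TT' QM MQ.
by rewrite TMT0 mulmx0 mul0mx => <-.
Qed.

End SpectralCalculus.

Section MatrixPower.
Variable R : realType.
Local Notation C := R[i].

(* [mxpow] leaves the zero eigenvalues at zero, so [mxpow 0 M] is the
   projector onto the support of [M] rather than the identity. *)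
Definition powR_supp (s x : R) : R := if x == 0 then 0 else powR x s.

Lemma powR_supp_ge0 s x : 0 <= powR_supp s x.
Proof. by rewrite /powR_supp; case: ifP => // _; exact: powR_ge0. Qed.

Lemma powR_suppM s x y : 0 <= x -> 0 <= y ->
  powR_supp s (x * y) = powR_supp s x * powR_supp s y.
Proof.
move=> x0 y0; rewrite /powR_supp mulf_eq0.
have [_|xn0] := eqVneq x 0; first by rewrite mul0r.
have [_|yn0] := eqVneq y 0; first by rewrite mulr0.
exact: powRM.
Qed.

Lemma powR_suppD s t x : powR_supp s x * powR_supp t x = powR_supp (s + t) x.
Proof.
rewrite /powR_supp; have [_|xn0] := eqVneq x 0; first by rewrite mul0r.
by rewrite powRD // xn0 implybT.
Qed.

Lemma powR_supp1 x : 0 <= x -> powR_supp 1 x = x.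
Proof. by move=> x0; rewrite /powR_supp; case: eqVneq => // _; rewrite powRr1. Qed.

Lemma mxpowE s n (M : 'M[C]_n) U d : spec_dec M (U, d) ->
  mxpow s M = specmx U (map_mx (powR_supp s) d).
Proof. by move=> sp; rewrite /mxpow (mxfunE _ sp). Qed.

Section PsdPower.
Variables (n : nat) (M : 'M[C]_n).
Hypothesis psdM : psdmx M.

Lemma psdmx_mxpow s : psdmx (mxpow s M).
Proof.
have [U [d [uU eM _]]] := psdmx_spec_dec psdM.
rewrite (mxpowE _ (conj uU eM)); apply: psdmx_specmx => k.
by rewrite mxE powR_supp_ge0.
Qed.

Lemma hermmx_mxpow s : (mxpow s M)^t* = mxpow s M.
Proof. by case: (psdmx_mxpow s). Qed.

Lemma mxpowD s t : mxpow s M *m mxpow t M = mxpow (s + t) M.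
Proof.
have [U [d [uU eM _]]] := psdmx_spec_dec psdM.
rewrite !(mxpowE _ (conj uU eM)) (specmx_mul _ _ uU); apply: congr1.
by apply/matrixP => i j; rewrite !mxE ord1 powR_suppD.
Qed.

Lemma mxpow1 : mxpow 1 M = M.
Proof.
have [U [d [uU eM d0]]] := psdmx_spec_dec psdM.
rewrite (mxpowE _ (conj uU eM)) [in RHS]eM; apply: congr1.
by apply/matrixP => i j; rewrite !mxE ord1 powR_supp1.
Qed.

Lemma mxpow_splitl s : mxpow s M = M *m mxpow (s - 1) M.
Proof. by rewrite -[X in _ = X *m _]mxpow1 mxpowD addrC subrK. Qed.

Lemma fixl_mxpow (P : 'M[C]_n) s : P *m M = M -> P *m mxpow s M = mxpow s M.
Proof. by move=> PM; rewrite mxpow_splitl mulmxA PM. Qed.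

Lemma mxpow_neq0 s : M != 0 -> mxpow s M != 0.
Proof.
apply: contraNneq => Ms0.
by rewrite -mxpow1 -(subrK s 1) -mxpowD Ms0 mulmx0.
Qed.

Lemma mxtrace_mxpow_real s : \tr (mxpow s M) = (complex.Re (\tr (mxpow s M)))%:C%C.
Proof.
have [U [d [uU eM _]]] := psdmx_spec_dec psdM.
by rewrite (mxpowE _ (conj uU eM)) mxtrace_specmx.
Qed.

Lemma Re_mxtrace_mxpow_gt0 s : M != 0 -> 0 < complex.Re (\tr (mxpow s M)).
Proof.
move=> Mn0; have [U [d [uU eM d0]]] := psdmx_spec_dec psdM.
have [k dk] : exists k, d 0 k != 0.
  apply/existsP; move: Mn0; apply: contraNT => /existsPn d_eq0; rewrite eM.
  suff -> : d = 0 by rewrite specmx0.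
  by apply/matrixP => i j; rewrite ord1 mxE; apply/eqP/negbNE/d_eq0.
rewrite (mxpowE _ (conj uU eM)) mxtrace_specmx //= (bigD1 k) //= mxE.
apply: (@lt_le_trans _ _ (powR_supp s (d 0 k))).
  by rewrite /powR_supp (negPf dk) powR_gt0 // lt_def dk d0.
by rewrite lerDl; apply: sumr_ge0 => j _; rewrite mxE powR_supp_ge0.
Qed.

End PsdPower.
End MatrixPower.

(** * Tensor products along index splittings *)

(* Each grouping of subsystems used below (AB; ABE as (AE)B or as A(BE); the
   four factors of a product state) is such a splitting, so the tensor
   calculus is developed only once. *)
Record tsplit n n1 n2 := TSplit {
  tfst : 'I_n -> 'I_n1;
  tsnd : 'I_n -> 'I_n2;
  tpair : 'I_n1 -> 'I_n2 -> 'I_n;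
  tpairK1 : forall i j, tfst (tpair i j) = i;
  tpairK2 : forall i j, tsnd (tpair i j) = j;
  tsplitK : forall x, tpair (tfst x) (tsnd x) = x }.

Definition tsplitC n n1 n2 (S : tsplit n n1 n2) : tsplit n n2 n1 :=
  @TSplit n n2 n1 (tsnd S) (tfst S) (fun j i => tpair S i j)
    (fun j i => tpairK2 S i j) (fun j i => tpairK1 S i j) (tsplitK S).

Lemma sumr_delta (K : pzSemiRingType) n (F : 'I_n -> K) j :
  \sum_i F i * (i == j)%:R = F j.
Proof.
rewrite (bigD1 j) //= eqxx mulr1 big1 ?addr0 // => i /negPf->.
by rewrite mulr0.
Qed.

Section TensorAlgebra.
Variables (K : comPzRingType) (n n1 n2 : nat) (S : tsplit n n1 n2).

Lemma big_tsplit (V : nmodType) (F : 'I_n -> V) :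
  \sum_x F x = \sum_i \sum_j F (tpair S i j).
Proof.
rewrite pair_big (reindex (fun p : 'I_n1 * 'I_n2 => tpair S p.1 p.2)) //=.
exists (fun x => (tfst S x, tsnd S x)) => [[i j] _|x _] /=.
  by rewrite tpairK1 tpairK2.
exact: tsplitK.
Qed.

Lemma tsplit_eq (x y : 'I_n) :
  (x == y) = (tfst S x == tfst S y) && (tsnd S x == tsnd S y).
Proof.
apply/eqP/andP => [->|[/eqP e1 /eqP e2]] //.
by rewrite -(tsplitK S x) -(tsplitK S y) e1 e2.
Qed.

Definition tslice (k : 'I_n2) : 'M[K]_(n1, n) :=
  \matrix_(i, x) (x == tpair S i k)%:R.

Definition tprod (X : 'M[K]_n1) (Y : 'M[K]_n2) : 'M[K]_n :=
  \matrix_(x, y) (X (tfst S x) (tfst S y) * Y (tsnd S x) (tsnd S y)).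

Definition ptraceR (M : 'M[K]_n) : 'M[K]_n1 :=
  \matrix_(i, j) \sum_k M (tpair S i k) (tpair S j k).

Definition ptraceL (M : 'M[K]_n) : 'M[K]_n2 :=
  \matrix_(i, j) \sum_k M (tpair S k i) (tpair S k j).

Lemma tprod_mul X1 Y1 X2 Y2 :
  tprod X1 Y1 *m tprod X2 Y2 = tprod (X1 *m X2) (Y1 *m Y2).
Proof.
apply/matrixP => x y; rewrite !mxE big_tsplit big_distrlr /=.
apply: eq_bigr => i _; apply: eq_bigr => j _.
by rewrite !mxE tpairK1 tpairK2 mulrACA.
Qed.

Lemma tprod1 : tprod 1%:M 1%:M = 1%:M.
Proof.
apply/matrixP => x y; rewrite !mxE tsplit_eq.
by case: (tfst S x == _); case: (tsnd S x == _); rewrite ?mulr1 ?mulr0.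
Qed.

Lemma tprodBl (X1 X2 : 'M[K]_n1) Y :
  tprod (X1 - X2) Y = tprod X1 Y - tprod X2 Y.
Proof. by apply/matrixP => x y; rewrite !mxE mulrBl. Qed.

Lemma mxtrace_tprod X Y : \tr (tprod X Y) = \tr X * \tr Y.
Proof.
rewrite /mxtrace big_tsplit big_distrlr /=.
by apply: eq_bigr => i _; apply: eq_bigr => j _; rewrite mxE tpairK1 tpairK2.
Qed.

Lemma ptraceR_tprod X Y : ptraceR (tprod X Y) = \tr Y *: X.
Proof.
apply/matrixP => i j; rewrite !mxE /mxtrace mulr_suml.
by apply: eq_bigr => k _; rewrite mxE !tpairK1 !tpairK2 mulrC.
Qed.

Lemma mxtrace_ptraceR M : \tr (ptraceR M) = \tr M.
Proof. by rewrite [RHS]/mxtrace big_tsplit; apply: eq_bigr => i _; rewrite mxE. Qed.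

Lemma ptraceR_mull X M : ptraceR (tprod X 1%:M *m M) = X *m ptraceR M.
Proof.
apply/matrixP => i j; rewrite !mxE.
under eq_bigr do rewrite mxE big_tsplit.
under [RHS]eq_bigr do rewrite mxE mulr_sumr.
rewrite exchange_big /=; apply: eq_bigr => i' _; apply: eq_bigr => k _.
rewrite -[RHS](sumr_delta (fun k' => X i i' * M (tpair S i' k') (tpair S j k))).
by apply: eq_bigr => k' _; rewrite !mxE !tpairK1 !tpairK2 mulrAC eq_sym.
Qed.

End TensorAlgebra.

Arguments tslice {K n n1 n2} S k.

Lemma ptraceLE (K : comPzRingType) n n1 n2 (S : tsplit n n1 n2) (M : 'M[K]_n) :
  ptraceL S M = ptraceR (tsplitC S) M.
Proof. by apply/matrixP => i j; rewrite !mxE. Qed.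

Lemma tprodC (K : comPzRingType) n n1 n2 (S : tsplit n n1 n2) X Y :
  tprod S X Y = tprod (tsplitC S) Y X :> 'M[K]_n.
Proof. by apply/matrixP => x y; rewrite !mxE mulrC. Qed.

Lemma mxtrace_ptraceL (K : comPzRingType) n n1 n2 (S : tsplit n n1 n2) (M : 'M[K]_n) :
  \tr (ptraceL S M) = \tr M.
Proof. by rewrite ptraceLE mxtrace_ptraceR. Qed.

Lemma ptraceL_mull (K : comPzRingType) n n1 n2 (S : tsplit n n1 n2) X (M : 'M[K]_n) :
  ptraceL S (tprod S 1%:M X *m M) = X *m ptraceL S M.
Proof. by rewrite !ptraceLE tprodC ptraceR_mull. Qed.

Section TensorPsd.
Variables (R : realType) (n n1 n2 : nat) (S : tsplit n n1 n2).
Local Notation C := R[i].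
Local Notation cplx := (fun x : R => x%:C%C).

Lemma tprod_trC (X : 'M[C]_n1) (Y : 'M[C]_n2) :
  (tprod S X Y)^t* = tprod S (X^t*) (Y^t*).
Proof. by apply/matrixP => x y; rewrite !mxE rmorphM. Qed.

Lemma tprod_unitary (U : 'M[C]_n1) (V : 'M[C]_n2) :
  U \is unitarymx -> V \is unitarymx -> tprod S U V \is unitarymx.
Proof.
move=> /unitarymxP uU /unitarymxP uV; apply/unitarymxP.
by rewrite tprod_trC tprod_mul uU uV tprod1.
Qed.

Lemma tprod_specmx (U : 'M[C]_n1) (V : 'M[C]_n2) d e :
  tprod S (specmx U d) (specmx V e) =
  specmx (tprod S U V) (\row_x (d 0 (tfst S x) * e 0 (tsnd S x))).
Proof.
have diagM : tprod S (diag_mx (map_mx cplx d)) (diag_mx (map_mx cplx e)) =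
             diag_mx (map_mx cplx (\row_x (d 0 (tfst S x) * e 0 (tsnd S x)))).
  apply/matrixP => x y; rewrite !mxE (tsplit_eq S).
  by case: (tfst S x == _); case: (tsnd S x == _); rewrite ?mulr0 ?mul0r ?rmorphM.
by rewrite /specmx -!tprod_mul diagM tprod_trC.
Qed.

Lemma tprod_spec_dec (X : 'M[C]_n1) (Y : 'M[C]_n2) U V d e :
  spec_dec X (U, d) -> spec_dec Y (V, e) ->
  spec_dec (tprod S X Y) (tprod S U V, \row_x (d 0 (tfst S x) * e 0 (tsnd S x))).
Proof.
move=> /spec_decE[uU ->] /spec_decE[uV ->].
by split; [exact: tprod_unitary | exact: tprod_specmx].
Qed.

Lemma psdmx_tprod (X : 'M[C]_n1) (Y : 'M[C]_n2) :
  psdmx X -> psdmx Y -> psdmx (tprod S X Y).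
Proof.
move=> /psdmx_spec_dec [U [d [_ -> d0]]] /psdmx_spec_dec [V [e [_ -> e0]]].
by rewrite tprod_specmx; apply: psdmx_specmx => x; rewrite mxE mulr_ge0.
Qed.

Lemma density_tprod (X : 'M[C]_n1) (Y : 'M[C]_n2) :
  density X -> density Y -> density (tprod S X Y).
Proof.
move=> [pX tX] [pY tY]; split; first exact: psdmx_tprod.
by rewrite mxtrace_tprod tX tY mulr1.
Qed.

Lemma mxpow_tprod s (X : 'M[C]_n1) (Y : 'M[C]_n2) : psdmx X -> psdmx Y ->
  mxpow s (tprod S X Y) = tprod S (mxpow s X) (mxpow s Y).
Proof.
move=> /psdmx_spec_dec [U [d [uU eX d0]]] /psdmx_spec_dec [V [e [uV eY e0]]].
have sX : spec_dec X (U, d) by [].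
have sY : spec_dec Y (V, e) by [].
rewrite (mxpowE _ (tprod_spec_dec sX sY)) (mxpowE _ sX) (mxpowE _ sY).
rewrite tprod_specmx; apply: congr1.
by apply/matrixP => i x; rewrite !mxE powR_suppM.
Qed.

Lemma ptraceR_slices (M : 'M[C]_n) :
  ptraceR S M = \sum_k tslice S k *m M *m (tslice S k)^t*.
Proof.
apply/matrixP => i j; rewrite !mxE summxE; apply: eq_bigr => k _.
have sliceM x : (tslice S k *m M) i x = M (tpair S i k) x.
  rewrite mxE -[RHS](sumr_delta (fun y => M y x) (tpair S i k)).
  by apply: eq_bigr => y _; rewrite mxE mulrC.
rewrite mxE -[LHS](sumr_delta (fun x => M (tpair S i k) x) (tpair S j k)).
by apply: eq_bigr => x _; rewrite sliceM !mxE rmorph_nat.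
Qed.

Lemma psdmx_ptraceR (M : 'M[C]_n) : psdmx M -> psdmx (ptraceR S M).
Proof.
by move=> pM; rewrite ptraceR_slices; apply: psdmx_sum => k; apply: psdmx_congr.
Qed.

(* With [P] the support projector of [ptraceR S M] and [G := (1 - P) (x) 1],
   [tr (G M G) = tr ((1 - P) ptraceR S M) = 0], hence [G M = 0]. *)
Lemma tprod_supp_ptraceR (M : 'M[C]_n) : psdmx M ->
  tprod S (mxpow 0 (ptraceR S M)) 1%:M *m M = M.
Proof.
move=> pM; have pr := psdmx_ptraceR pM.
set P := mxpow 0 (ptraceR S M).
have PP : P *m P = P by rewrite /P (mxpowD pr) addr0.
have Pr : P *m ptraceR S M = ptraceR S M.
  by rewrite /P -[X in _ *m X = _](mxpow1 pr) (mxpowD pr) add0r (mxpow1 pr).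
set G := tprod S (1%:M - P) 1%:M.
have hG : G^t* = G.
  by rewrite /G tprod_trC trmxC1 linearB /= map_mxB trmxC1 (hermmx_mxpow pr).
have GG : G *m G = G.
  by rewrite /G tprod_mul mulmx1 mulmxBl mul1mx mulmxBr mulmx1 PP subrr subr0.
have GM : G *m M = 0.
  apply: psdmx_congr_eq0 => //; apply: psdmx_trace0; first exact: psdmx_congr.
  rewrite mxtrace_mulC mulmxA hG GG /G -(mxtrace_ptraceR S) ptraceR_mull.
  by rewrite mulmxBl mul1mx Pr subrr mxtrace0.
have -> : tprod S P 1%:M = 1%:M - G by rewrite /G tprodBl tprod1 opprB addrC subrK.
by rewrite mulmxBl mul1mx GM subr0.
Qed.

End TensorPsd.

Section PartialTraceL.
Variables (R : realType) (n n1 n2 : nat) (S : tsplit n n1 n2).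
Local Notation C := R[i].

Lemma psdmx_ptraceL (M : 'M[C]_n) : psdmx M -> psdmx (ptraceL S M).
Proof. by rewrite ptraceLE; apply: psdmx_ptraceR. Qed.

Lemma tprod_supp_ptraceL (M : 'M[C]_n) : psdmx M ->
  tprod S 1%:M (mxpow 0 (ptraceL S M)) *m M = M.
Proof. by rewrite ptraceLE tprodC; apply: tprod_supp_ptraceR. Qed.

End PartialTraceL.

Section Interchange.
Variables (K : comPzRingType) (n n1 n2 k e k1 k2 e1 e2 : nat).
Variables (S : tsplit n n1 n2) (S' : tsplit n k e) (S1 : tsplit n1 k1 e1).
Variables (S2 : tsplit n2 k2 e2) (SK : tsplit k k1 k2) (SE : tsplit e e1 e2).
(* [S'] groups ['I_n] as (K1 K2)(E1 E2) and [S] as (K1 E1)(K2 E2); the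
   hypothesis says that both index the same four-party system. *)
Hypothesis tpair_interchange : forall a1 a2 b1 b2,
  tpair S' (tpair SK a1 a2) (tpair SE b1 b2) = tpair S (tpair S1 a1 b1) (tpair S2 a2 b2).

Lemma tprod_interchange (A : 'M[K]_k1) (B : 'M[K]_k2) (A' : 'M[K]_e1) (B' : 'M[K]_e2) :
  tprod S' (tprod SK A B) (tprod SE A' B') = tprod S (tprod S1 A A') (tprod S2 B B').
Proof.
have splitE z : z = tpair S (tpair S1 (tfst SK (tfst S' z)) (tfst SE (tsnd S' z)))
                            (tpair S2 (tsnd SK (tfst S' z)) (tsnd SE (tsnd S' z))).
  by rewrite -tpair_interchange !tsplitK.
apply/matrixP => x y; rewrite !mxE [in RHS](splitE x) [in RHS](splitE y).
by rewrite !(tpairK1, tpairK2) mulrACA.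
Qed.

Lemma ptraceL_interchange (X : 'M[K]_n1) (Y : 'M[K]_n2) :
  ptraceL S' (tprod S X Y) = tprod SE (ptraceL S1 X) (ptraceL S2 Y).
Proof.
apply/matrixP => x y; rewrite !mxE (big_tsplit SK) big_distrlr /=.
apply: eq_bigr => a1 _; apply: eq_bigr => a2 _.
rewrite -[in LHS](tsplitK SE x) -[in LHS](tsplitK SE y) !tpair_interchange.
by rewrite !mxE !(tpairK1, tpairK2).
Qed.

Lemma ptraceR_interchange (X : 'M[K]_n1) (Y : 'M[K]_n2) :
  ptraceR S' (tprod S X Y) = tprod SK (ptraceR S1 X) (ptraceR S2 Y).
Proof.
apply/matrixP => x y; rewrite !mxE (big_tsplit SE) big_distrlr /=.
apply: eq_bigr => b1 _; apply: eq_bigr => b2 _.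
rewrite -[in LHS](tsplitK SK x) -[in LHS](tsplitK SK y) !tpair_interchange.
by rewrite !mxE !(tpairK1, tpairK2).
Qed.

End Interchange.

Local Notation unidx := mxtens_unindex.
Local Notation idx := mxtens_index.

Lemma unidxK1 m n (i : 'I_m) (j : 'I_n) : (unidx (idx (i, j))).1 = i.
Proof. by rewrite mxtens_indexK. Qed.

Lemma unidxK2 m n (i : 'I_m) (j : 'I_n) : (unidx (idx (i, j))).2 = j.
Proof. by rewrite mxtens_indexK. Qed.

Lemma idxK m n (x : 'I_(m * n)) : idx ((unidx x).1, (unidx x).2) = x.
Proof. by rewrite -surjective_pairing mxtens_unindexK. Qed.

Definition tsplit_tens m n : tsplit (m * n) m n :=
  @TSplit (m * n) m n (fun x => (unidx x).1) (fun x => (unidx x).2)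
    (fun i j => idx (i, j)) (@unidxK1 m n) (@unidxK2 m n) (@idxK m n).

Section ProductSplitting.
Variables (k k1 k2 e e1 e2 : nat) (SK : tsplit k k1 k2) (SE : tsplit e e1 e2).

Let fst_prod (x : 'I_(k * e)) : 'I_(k1 * e1) :=
  idx (tfst SK (unidx x).1, tfst SE (unidx x).2).
Let snd_prod (x : 'I_(k * e)) : 'I_(k2 * e2) :=
  idx (tsnd SK (unidx x).1, tsnd SE (unidx x).2).
Let pair_prod (y : 'I_(k1 * e1)) (z : 'I_(k2 * e2)) : 'I_(k * e) :=
  idx (tpair SK (unidx y).1 (unidx z).1, tpair SE (unidx y).2 (unidx z).2).

Lemma pair_prodK1 y z : fst_prod (pair_prod y z) = y.
Proof. by rewrite /fst_prod /pair_prod unidxK1 unidxK2 !tpairK1 idxK. Qed.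

Lemma pair_prodK2 y z : snd_prod (pair_prod y z) = z.
Proof. by rewrite /snd_prod /pair_prod unidxK1 unidxK2 !tpairK2 idxK. Qed.

Lemma split_prodK x : pair_prod (fst_prod x) (snd_prod x) = x.
Proof. by rewrite /fst_prod /snd_prod /pair_prod !unidxK1 !unidxK2 !tsplitK idxK. Qed.

Definition tsplit_prod : tsplit (k * e) (k1 * e1) (k2 * e2) :=
  TSplit pair_prodK1 pair_prodK2 split_prodK.

Lemma tsplit_prod_interchange a1 a2 b1 b2 :
  tpair (tsplit_tens k e) (tpair SK a1 a2) (tpair SE b1 b2) =
  tpair tsplit_prod (tpair (tsplit_tens k1 e1) a1 b1) (tpair (tsplit_tens k2 e2) a2 b2).
Proof. by rewrite /= /pair_prod !unidxK1 !unidxK2. Qed.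

End ProductSplitting.

Section TripartiteSplittings.
Variables (a b e : nat).

Let fst_AE (x : 'I_(a * b * e)) : 'I_(a * e) := idx (fst3 x, thd3 x).
Let pair_AE (y : 'I_(a * e)) (j : 'I_b) : 'I_(a * b * e) :=
  idx3 (unidx y).1 j (unidx y).2.

Lemma pair_AEK1 y j : fst_AE (pair_AE y j) = y.
Proof. by rewrite /fst_AE /pair_AE /fst3 /thd3 /idx3 !unidxK1 !unidxK2 idxK. Qed.

Lemma pair_AEK2 y j : snd3 (pair_AE y j) = j.
Proof. by rewrite /pair_AE /snd3 /idx3 !unidxK1 !unidxK2. Qed.

Lemma split_AEK x : pair_AE (fst_AE x) (snd3 x) = x.
Proof. by rewrite /fst_AE /pair_AE /fst3 /snd3 /thd3 /idx3 !unidxK1 !unidxK2 !idxK. Qed.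

Definition tsplit_AE_B : tsplit (a * b * e) (a * e) b :=
  TSplit pair_AEK1 pair_AEK2 split_AEK.

Let snd_BE (x : 'I_(a * b * e)) : 'I_(b * e) := idx (snd3 x, thd3 x).
Let pair_BE (i : 'I_a) (y : 'I_(b * e)) : 'I_(a * b * e) :=
  idx3 i (unidx y).1 (unidx y).2.

Lemma pair_BEK1 i y : fst3 (pair_BE i y) = i.
Proof. by rewrite /pair_BE /fst3 /idx3 !unidxK1. Qed.

Lemma pair_BEK2 i y : snd_BE (pair_BE i y) = y.
Proof. by rewrite /snd_BE /pair_BE /snd3 /thd3 /idx3 !unidxK1 !unidxK2 idxK. Qed.

Lemma split_BEK x : pair_BE (fst3 x) (snd_BE x) = x.
Proof. by rewrite /snd_BE /pair_BE /fst3 /snd3 /thd3 /idx3 !unidxK1 !unidxK2 !idxK. Qed.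

Definition tsplit_A_BE : tsplit (a * b * e) a (b * e) :=
  TSplit pair_BEK1 pair_BEK2 split_BEK.

Lemma trB3_ptraceR (R : realType) (M : 'M[R[i]]_(a * b * e)) :
  trB3 M = ptraceR tsplit_AE_B M.
Proof. by apply/matrixP => i j; rewrite !mxE. Qed.

Lemma trA3_ptraceL (R : realType) (M : 'M[R[i]]_(a * b * e)) :
  trA3 M = ptraceL tsplit_A_BE M.
Proof. by apply/matrixP => i j; rewrite !mxE. Qed.

End TripartiteSplittings.

Section Identifications.
Variable R : realType.
Local Notation C := R[i].

Lemma trR_ptraceR m n (M : 'M[C]_(m * n)) : trR M = ptraceR (tsplit_tens m n) M.
Proof. by apply/matrixP => i j; rewrite !mxE. Qed.

Lemma trL_ptraceL m n (M : 'M[C]_(m * n)) : trL M = ptraceL (tsplit_tens m n) M.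
Proof. by apply/matrixP => i j; rewrite !mxE. Qed.

Lemma tensmx_tprod m n (A : 'M[C]_m) (B : 'M[C]_n) : A *t B = tprod (tsplit_tens m n) A B.
Proof. by apply/matrixP => i j; rewrite !mxE. Qed.

Lemma embB_tprod a b e (X : 'M[C]_(a * e)) : embB b X = tprod (tsplit_AE_B a b e) X 1%:M.
Proof. by apply/matrixP => i j; rewrite !mxE. Qed.

Lemma prod_state_tprod a1 b1 a2 b2 (sigma : 'M[C]_(a1 * b1)) (tau : 'M[C]_(a2 * b2)) :
  prod_state sigma tau =
  tprod (tsplit_prod (tsplit_tens a1 a2) (tsplit_tens b1 b2)) sigma tau.
Proof. by apply/matrixP => i j; rewrite !mxE. Qed.

Lemma trL_trB3 a b e (M : 'M[C]_(a * b * e)) : trL (trB3 M) = trL M.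
Proof.
apply/matrixP => i j; rewrite !mxE (big_tsplit (tsplit_tens a b)).
by apply: eq_bigr => k _; rewrite mxE; apply: eq_bigr => l _; rewrite !mxtens_indexK.
Qed.

Lemma tprod1_regroup a b e (P : 'M[C]_e) :
  tprod (tsplit_A_BE a b e) 1%:M (tprod (tsplit_tens b e) 1%:M P) =
  tprod (tsplit_AE_B a b e) (tprod (tsplit_tens a e) 1%:M P) 1%:M.
Proof.
apply/matrixP => x y; rewrite !mxE.
cbn [tfst tsnd tsplit_A_BE tsplit_AE_B tsplit_tens]; rewrite !unidxK1 !unidxK2.
by rewrite mulrA mulrAC.
Qed.

End Identifications.

Section ProductExtension.
Variables (a1 b1 e1 a2 b2 e2 : nat).

Definition tsplit_AB := tsplit_prod (tsplit_tens a1 a2) (tsplit_tens b1 b2).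
Definition tsplit_ABE := tsplit_prod tsplit_AB (tsplit_tens e1 e2).
Definition tsplit_AE := tsplit_prod (tsplit_tens a1 a2) (tsplit_tens e1 e2).
Definition tsplit_BE := tsplit_prod (tsplit_tens b1 b2) (tsplit_tens e1 e2).

Lemma tsplit_AE_B_interchange x1 x2 y1 y2 :
  tpair (tsplit_AE_B (a1 * a2) (b1 * b2) (e1 * e2)) (tpair tsplit_AE x1 x2)
        (tpair (tsplit_tens b1 b2) y1 y2) =
  tpair tsplit_ABE (tpair (tsplit_AE_B a1 b1 e1) x1 y1)
                   (tpair (tsplit_AE_B a2 b2 e2) x2 y2).
Proof.
cbn [tpair tsplit_AE_B tsplit_prod tsplit_tens tsplit_AE tsplit_ABE tsplit_AB].
by rewrite /idx3 !(unidxK1, unidxK2).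
Qed.

Lemma tsplit_A_BE_interchange x1 x2 y1 y2 :
  tpair (tsplit_A_BE (a1 * a2) (b1 * b2) (e1 * e2)) (tpair (tsplit_tens a1 a2) x1 x2)
        (tpair tsplit_BE y1 y2) =
  tpair tsplit_ABE (tpair (tsplit_A_BE a1 b1 e1) x1 y1)
                   (tpair (tsplit_A_BE a2 b2 e2) x2 y2).
Proof.
cbn [tpair tsplit_A_BE tsplit_prod tsplit_tens tsplit_BE tsplit_ABE tsplit_AB].
by rewrite /idx3 !(unidxK1, unidxK2).
Qed.

End ProductExtension.

(** * Additivity of the Renyi conditional mutual information *)

Section RenyiCMIOperators.
Variable R : realType.
Local Notation C := R[i].

(* The let-bound operators of [renyiCMI], named so that each of them can be
   shown to commute with tensor products. *)
Definition cmi_sandAE (alpha : R) a b e (rho : 'M[C]_(a * b * e)) : 'M[C]_(a * b * e) :=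
  embB b (mxpow ((1 - alpha) / 2) (trB3 rho)).
Definition cmi_inner (alpha : R) a b e (rho : 'M[C]_(a * b * e)) : 'M[C]_(b * e) :=
  trA3 (cmi_sandAE alpha rho *m mxpow alpha rho *m cmi_sandAE alpha rho).
Definition cmi_sandE (alpha : R) a b e (rho : 'M[C]_(a * b * e)) : 'M[C]_(b * e) :=
  (1%:M : 'M[C]_b) *t mxpow ((alpha - 1) / 2) (trL rho).
Definition cmi_op (alpha : R) a b e (rho : 'M[C]_(a * b * e)) : 'M[C]_(b * e) :=
  cmi_sandE alpha rho *m cmi_inner alpha rho *m cmi_sandE alpha rho.

Lemma renyiCMIE alpha a b e (rho : 'M[C]_(a * b * e)) :
  renyiCMI alpha rho =
  alpha / (alpha - 1) * ln (complex.Re (\tr (mxpow alpha^-1 (cmi_op alpha rho)))).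
Proof. by []. Qed.

Section Psd.
Variables (alpha : R) (a b e : nat) (rho : 'M[C]_(a * b * e)).
Hypothesis psd_rho : psdmx rho.

Lemma psdmx_trB3 : psdmx (trB3 rho).
Proof. by rewrite trB3_ptraceR; apply: psdmx_ptraceR. Qed.

Lemma psdmx_trL : psdmx (trL rho).
Proof. by rewrite trL_ptraceL; apply: psdmx_ptraceL. Qed.

Lemma cmi_sandAE_trC : (cmi_sandAE alpha rho)^t* = cmi_sandAE alpha rho.
Proof. by rewrite /cmi_sandAE embB_tprod tprod_trC trmxC1 (hermmx_mxpow psdmx_trB3). Qed.

Lemma cmi_sandE_trC : (cmi_sandE alpha rho)^t* = cmi_sandE alpha rho.
Proof. by rewrite /cmi_sandE tensmx_tprod tprod_trC trmxC1 (hermmx_mxpow psdmx_trL). Qed.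

Lemma psdmx_cmi_sandwiched :
  psdmx (cmi_sandAE alpha rho *m mxpow alpha rho *m cmi_sandAE alpha rho).
Proof. by rewrite -{2}cmi_sandAE_trC; apply/psdmx_congr/psdmx_mxpow. Qed.

Lemma psdmx_cmi_inner : psdmx (cmi_inner alpha rho).
Proof. by rewrite /cmi_inner trA3_ptraceL; apply/psdmx_ptraceL/psdmx_cmi_sandwiched. Qed.

Lemma psdmx_cmi_op : psdmx (cmi_op alpha rho).
Proof. by rewrite /cmi_op -{2}cmi_sandE_trC; apply/psdmx_congr/psdmx_cmi_inner. Qed.

End Psd.

Section Tensor.
Variables (alpha : R) (a1 b1 e1 a2 b2 e2 : nat).
Variables (w1 : 'M[C]_(a1 * b1 * e1)) (w2 : 'M[C]_(a2 * b2 * e2)).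
Hypotheses (psd_w1 : psdmx w1) (psd_w2 : psdmx w2).
Local Notation w := (tprod (tsplit_ABE a1 b1 e1 a2 b2 e2) w1 w2).

Lemma trR_tprod : trR w = prod_state (trR w1) (trR w2).
Proof.
rewrite prod_state_tprod !trR_ptraceR; apply: ptraceR_interchange.
exact: tsplit_prod_interchange.
Qed.

Lemma trL_tprod : trL w = tprod (tsplit_tens e1 e2) (trL w1) (trL w2).
Proof.
rewrite !trL_ptraceL; apply: ptraceL_interchange.
exact: tsplit_prod_interchange.
Qed.

Lemma trB3_tprod : trB3 w = tprod (tsplit_AE a1 e1 a2 e2) (trB3 w1) (trB3 w2).
Proof.
rewrite !trB3_ptraceR; apply: ptraceR_interchange.
exact: tsplit_AE_B_interchange.
Qed.

Lemma cmi_sandAE_tprod :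
  cmi_sandAE alpha w = tprod (tsplit_ABE a1 b1 e1 a2 b2 e2)
                             (cmi_sandAE alpha w1) (cmi_sandAE alpha w2).
Proof.
rewrite /cmi_sandAE trB3_tprod (mxpow_tprod _ _ (psdmx_trB3 psd_w1) (psdmx_trB3 psd_w2)).
rewrite !embB_tprod -(tprod1 _ (tsplit_tens b1 b2)); apply: tprod_interchange.
exact: tsplit_AE_B_interchange.
Qed.

Lemma cmi_inner_tprod :
  cmi_inner alpha w =
  tprod (tsplit_BE b1 e1 b2 e2) (cmi_inner alpha w1) (cmi_inner alpha w2).
Proof.
rewrite /cmi_inner cmi_sandAE_tprod (mxpow_tprod _ _ psd_w1 psd_w2) !tprod_mul.
rewrite !trA3_ptraceL.
apply: ptraceL_interchange; exact: tsplit_A_BE_interchange.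
Qed.

Lemma cmi_sandE_tprod :
  cmi_sandE alpha w =
  tprod (tsplit_BE b1 e1 b2 e2) (cmi_sandE alpha w1) (cmi_sandE alpha w2).
Proof.
rewrite /cmi_sandE trL_tprod (mxpow_tprod _ _ (psdmx_trL psd_w1) (psdmx_trL psd_w2)).
rewrite !tensmx_tprod -(tprod1 _ (tsplit_tens b1 b2)); apply: tprod_interchange.
exact: tsplit_prod_interchange.
Qed.

Lemma cmi_op_tprod :
  cmi_op alpha w = tprod (tsplit_BE b1 e1 b2 e2) (cmi_op alpha w1) (cmi_op alpha w2).
Proof. by rewrite /cmi_op cmi_inner_tprod cmi_sandE_tprod !tprod_mul. Qed.

End Tensor.
End RenyiCMIOperators.

Section RenyiCMIAdditivity.
Variable R : realType.
Local Notation C := R[i].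

Section CMIPositivity.
Variables (alpha : R) (a b e : nat) (rho : 'M[C]_(a * b * e)).
Hypothesis density_rho : density rho.
Let psd_rho : psdmx rho := proj1 density_rho.
Let psd_AE : psdmx (trB3 rho) := psdmx_trB3 psd_rho.
Let psd_E : psdmx (trL rho) := psdmx_trL psd_rho.

Lemma cmi_sandwiched_neq0 :
  cmi_sandAE alpha rho *m mxpow alpha rho *m cmi_sandAE alpha rho != 0.
Proof.
have QR : tprod (tsplit_AE_B a b e) (mxpow 0 (trB3 rho)) 1%:M *m rho = rho.
  by rewrite trB3_ptraceR; apply: tprod_supp_ptraceR.
apply: (sandwich_neq0 _ (hermmx_mxpow psd_rho alpha) (fixl_mxpow psd_rho alpha QR)
  (T' := tprod (tsplit_AE_B a b e) (mxpow (- ((1 - alpha) / 2)) (trB3 rho)) 1%:M)).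
- by rewrite tprod_trC trmxC1 (hermmx_mxpow psd_AE).
- by rewrite /cmi_sandAE embB_tprod tprod_mul (mxpowD psd_AE) addNr mulmx1.
- by rewrite /cmi_sandAE embB_tprod tprod_mul (mxpowD psd_AE) addrN mulmx1.
- exact/mxpow_neq0/density_neq0.
Qed.

Lemma cmi_inner_neq0 : cmi_inner alpha rho != 0.
Proof.
move: cmi_sandwiched_neq0; apply: contra_neq => inner0.
apply: psdmx_trace0; first exact: psdmx_cmi_sandwiched.
rewrite -(mxtrace_ptraceL (tsplit_A_BE a b e)) -trA3_ptraceL.
by rewrite -/(cmi_inner _ _) inner0 mxtrace0.
Qed.

Lemma cmi_op_neq0 : cmi_op alpha rho != 0.
Proof.
set QE := tprod (tsplit_tens b e) 1%:M (mxpow 0 (trL rho)).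
have QAE : tprod (tsplit_tens a e) 1%:M (mxpow 0 (trL rho)) *m trB3 rho = trB3 rho.
  by rewrite -(trL_trB3 rho) trL_ptraceL (tprod_supp_ptraceL _ psd_AE).
have QY : QE *m cmi_inner alpha rho = cmi_inner alpha rho.
  rewrite /cmi_inner trA3_ptraceL -ptraceL_mull !mulmxA tprod1_regroup.
  rewrite /cmi_sandAE embB_tprod.
  by rewrite tprod_mul (fixl_mxpow psd_AE _ QAE) mulmx1.
rewrite /cmi_op /cmi_sandE tensmx_tprod.
apply: (sandwich_neq0 _ (proj1 (psdmx_cmi_inner alpha psd_rho)) QY
  (T' := tprod (tsplit_tens b e) 1%:M (mxpow (- ((alpha - 1) / 2)) (trL rho)))).
- by rewrite tprod_trC trmxC1 (hermmx_mxpow psd_E).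
- by rewrite tprod_mul mulmx1 (mxpowD psd_E) addNr.
- by rewrite tprod_mul mulmx1 (mxpowD psd_E) addrN.
- exact: cmi_inner_neq0.
Qed.

End CMIPositivity.

Lemma renyiCMI_tprod alpha a1 b1 e1 a2 b2 e2
    (w1 : 'M[C]_(a1 * b1 * e1)) (w2 : 'M[C]_(a2 * b2 * e2)) :
  density w1 -> density w2 ->
  renyiCMI alpha (tprod (tsplit_ABE a1 b1 e1 a2 b2 e2) w1 w2) =
  renyiCMI alpha w1 + renyiCMI alpha w2.
Proof.
move=> d1 d2; have [p1 _] := d1; have [p2 _] := d2.
have pX1 := psdmx_cmi_op alpha p1; have pX2 := psdmx_cmi_op alpha p2.
rewrite !renyiCMIE (cmi_op_tprod _ p1 p2) (mxpow_tprod _ _ pX1 pX2) mxtrace_tprod.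
rewrite (mxtrace_mxpow_real pX1) (mxtrace_mxpow_real pX2) -rmorphM /=.
by rewrite lnM ?mulrDr // posrE Re_mxtrace_mxpow_gt0 // cmi_op_neq0.
Qed.

End RenyiCMIAdditivity.

(** * Squashed entanglement *)

Section ExtendedRealInf.
Variable R : realType.
Local Open Scope classical_set_scope.
Local Open Scope ereal_scope.

Lemma ereal_inf_lt_pinfty (A : set (\bar R)) x :
  A x -> x \is a fin_num -> ereal_inf A < +oo.
Proof.
by move=> Ax xfin; rewrite (le_lt_trans (ereal_inf_lbound Ax)) // ltey_eq xfin.
Qed.

Lemma ereal_inf_le_add (A A1 A2 : set (\bar R)) :
  A1 !=set0 -> A2 !=set0 ->
  (forall x, A1 x -> x \is a fin_num) -> (forall x, A2 x -> x \is a fin_num) ->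
  (forall x1 x2, A1 x1 -> A2 x2 -> A (x1 + x2)) ->
  ereal_inf A <= ereal_inf A1 + ereal_inf A2.
Proof.
move=> [y1 A1y1] [y2 A2y2] fin1 fin2 A_add.
have le_inf1 x2 : A2 x2 -> ereal_inf A <= ereal_inf A1 + x2.
  move=> A2x2; rewrite -leeBlDr ?fin2 //; apply/ereal_infP => x1 A1x1.
  by rewrite leeBlDr ?fin2 //; apply/ereal_inf_lbound/A_add.
have := ereal_inf_lt_pinfty A1y1 (fin1 _ A1y1).
case E1 : (ereal_inf A1) => [r1| |] // _.
  rewrite -leeBlDl //; apply/ereal_infP => x2 A2x2.
  by rewrite leeBlDl // -E1 le_inf1.
by have := le_inf1 _ A2y2; rewrite E1 addNye leeNy_eq => /eqP ->.
Qed.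

End ExtendedRealInf.

Section SquashedEntanglement.
Variable R : realType.
Local Open Scope classical_set_scope.
Local Notation C := R[i].

Definition cmi_values (alpha : R) a b (rho : 'M[C]_(a * b)) : set (\bar R) :=
  [set x | exists e (w : 'M[C]_(a * b * e)),
     density w /\ trR w = rho /\ x = (renyiCMI alpha w)%:E].

Lemma sqEntE alpha a b (rho : 'M[C]_(a * b)) :
  sqEnt alpha rho = ((2^-1)%:E * ereal_inf (cmi_values alpha rho))%E.
Proof. by []. Qed.

Lemma cmi_values_fin alpha a b (rho : 'M[C]_(a * b)) x :
  cmi_values alpha rho x -> x \is a fin_num.
Proof. by case=> e [w [_ [_ ->]]]. Qed.

Lemma cmi_values_neq0 alpha a b (rho : 'M[C]_(a * b)) :
  density rho -> cmi_values alpha rho !=set0.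
Proof.
move=> drho; pose w := tprod (tsplit_tens (a * b) 1) rho 1%:M.
exists (renyiCMI alpha w)%:E, 1%N, w; split; last split => //.
  by apply: density_tprod => //; split; [exact: psdmx1 | exact: mxtrace1].
by rewrite trR_ptraceR ptraceR_tprod mxtrace1 scale1r.
Qed.

Lemma cmi_values_prod_state alpha a1 b1 a2 b2
    (sigma : 'M[C]_(a1 * b1)) (tau : 'M[C]_(a2 * b2)) x1 x2 :
  cmi_values alpha sigma x1 -> cmi_values alpha tau x2 ->
  cmi_values alpha (prod_state sigma tau) (x1 + x2)%E.
Proof.
move=> [e1 [w1 [d1 [<- ->]]]] [e2 [w2 [d2 [<- ->]]]].
exists (e1 * e2)%N, (tprod (tsplit_ABE a1 b1 e1 a2 b2 e2) w1 w2).
split; first exact: density_tprod.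
by rewrite trR_tprod (renyiCMI_tprod _ d1 d2) EFinD.
Qed.

End SquashedEntanglement.

Unset Implicit Arguments.

Theorem proposition3 (R : realType) (alpha : R) (a1 b1 a2 b2 : nat)
  (sigma : 'M[R[i]]_(a1 * b1)) (tau : 'M[R[i]]_(a2 * b2)) :
  0 < alpha -> alpha != 1 ->
  density sigma -> density tau ->
  (sqEnt alpha (prod_state sigma tau) <= sqEnt alpha sigma + sqEnt alpha tau)%E.
Proof.
(* Additivity of [renyiCMI] on tensor products holds for every [alpha]. *)
move=> _ _ dsigma dtau; rewrite !sqEntE.
have [y1 Y1] := cmi_values_neq0 alpha dsigma.
have [y2 Y2] := cmi_values_neq0 alpha dtau.
rewrite -muleDr //; last first.
  rewrite /adde_def !(lt_eqF (ereal_inf_lt_pinfty Y1 (cmi_values_fin Y1))).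
  by rewrite !(lt_eqF (ereal_inf_lt_pinfty Y2 (cmi_values_fin Y2))) andbF.
apply: lee_wpmul2l; first by rewrite lee_fin invr_ge0.
apply: ereal_inf_le_add; [by exists y1 | by exists y2 | | |].
- exact: cmi_values_fin.
- exact: cmi_values_fin.
- exact: cmi_values_prod_state.
Qed.
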